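(* Let $L$ be an IL-algebra with greatest element $\top$, and let $F$ be an affine filter of $L$. Then $L/F$, with operations $[x]\cup[y]=[x\cup y]$, $[x]\cap[y]=[x\cap y]$, $[x]\ast[y]=[x\ast y]$, $[x]\to[y]=[x\to y]$, least element $[\bot]$ and unit $[1]$, is a residuated lattice.
   Context: An IL-algebra is a structure $(L,\cup,\cap,\bot,\to,\ast,1)$ such that $(L,\cup,\cap,\bot)$ is a lattice with least element $\bot$, $(L,\ast,1)$ is a commutative monoid with unit $1$, and for all $x,y,z\in L$: $x\ast y\leq z$ iff $x\leq y\to z$; it has a greatest element $\top=\bot\to\bot$. A filter of $L$ is a non-empty $F\subseteq L$ with $1\in F$, such that $x,y\in F$ implies $x\ast y\in F$ and $x\cap y\in F$, and $x\in F$, $x\leq y$ implies $y\in F$. A filter $F$ is affine if $\top\to1\in F$. For a filter $F$, $x\,\rho_F\,y$ iff $x\to y\in F$ and $y\to x\in F$; $[x]$ is the $\rho_F$-class of $x$ and $L/F=\{[x]:x\in L\}$. A residuated lattice is a structure $(L,\cup,\cap,0,\to,\ast,1)$ such that $(L,\cup,\cap,0,1)$ is a bounded lattice with least element $0$ and greatest element $1$, $(L,\ast,1)$ is a commutative monoid, and $x\ast y\leq z$ iff $x\leq y\to z$ for all $x,y,z$. *)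

Set Implicit Arguments.

Section Sig.
Variable A : Type.
Variables (join meet : A -> A -> A) (bot : A) (imp mul : A -> A -> A) (one : A).

Definition lat_le (x y : A) : Prop := meet x y = x.

Definition is_lattice : Prop :=
  (forall x y, join x y = join y x) /\
  (forall x y, meet x y = meet y x) /\
  (forall x y z, join x (join y z) = join (join x y) z) /\
  (forall x y z, meet x (meet y z) = meet (meet x y) z) /\
  (forall x y, join x (meet x y) = x) /\
  (forall x y, meet x (join x y) = x).

Definition is_comm_monoid : Prop :=
  (forall x y z, mul x (mul y z) = mul (mul x y) z) /\
  (forall x y, mul x y = mul y x) /\
  (forall x, mul one x = x).

Definition residuation : Prop :=
  forall x y z, lat_le (mul x y) z <-> lat_le x (imp y z).

Definition is_IL_algebra : Prop :=
  is_lattice /\ (forall x, lat_le bot x) /\ is_comm_monoid /\ residuation.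

Definition is_residuated_lattice : Prop :=
  is_lattice /\ (forall x, lat_le bot x) /\ (forall x, lat_le x one) /\
  is_comm_monoid /\ residuation.
End Sig.

Record ILAlgebra := {
  carrier :> Type;
  il_join : carrier -> carrier -> carrier;
  il_meet : carrier -> carrier -> carrier;
  il_bot : carrier;
  il_imp : carrier -> carrier -> carrier;
  il_mul : carrier -> carrier -> carrier;
  il_one : carrier;
  il_laws : is_IL_algebra il_join il_meet il_bot il_imp il_mul il_one
}.

Section ILDefs.
Variable L : ILAlgebra.

Definition il_le (x y : L) : Prop := lat_le (il_meet L) x y.
Definition il_top : L := il_imp L (il_bot L) (il_bot L).

Definition is_filter (F : L -> Prop) : Prop :=
  (exists x, F x) /\ F (il_one L) /\
  (forall x y, F x -> F y -> F (il_mul L x y) /\ F (il_meet L x y)) /\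
  (forall x y, F x -> il_le x y -> F y).

Definition affine (F : L -> Prop) : Prop := F (il_imp L il_top (il_one L)).

Definition rho (F : L -> Prop) (x y : L) : Prop :=
  F (il_imp L x y) /\ F (il_imp L y x).

Definition rclass (F : L -> Prop) (x : L) : L -> Prop := fun y => rho F x y.

Definition quot (F : L -> Prop) : Type :=
  { S : L -> Prop | exists x, S = rclass F x }.

Definition qcls (F : L -> Prop) (x : L) : quot F :=
  exist _ (rclass F x) (ex_intro _ x eq_refl).
End ILDefs.

Arguments is_filter {L} F.
Arguments affine {L} F.
Arguments rho {L} F x y.
Arguments rclass {L} F x.
Arguments quot {L} F.
Arguments qcls {L} F x.

(** ρ_F is a congruence: every operation of an IL-algebra is monotone (→ is
    antitone in its first argument), and the corresponding bounds such as
    [(x → x') ∧ (y → y') ≤ (x ∧ y) → (x' ∧ y')] land in F because F is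
    upward closed and closed under ∗ and ∧.  Hence the equational laws
    descend to L/F.  The quotient order is [[a] ≤ [b] iff a → b ∈ F], so
    residuation descends through [(a ∗ b) → c = a → (b → c)].  The one new
    law is that [1] is the top class: [x ≤ ⊤] gives [⊤ → 1 ≤ x → 1], and
    affinity puts [⊤ → 1] in F. *)

From Stdlib Require Import ProofIrrelevance FunctionalExtensionality
  PropExtensionality IndefiniteDescription.

Set Implicit Arguments.

Section ILAlgebraTheory.
Variable L : ILAlgebra.
Local Notation join := (il_join L).
Local Notation meet := (il_meet L).
Local Notation bot := (il_bot L).
Local Notation imp := (il_imp L).
Local Notation mul := (il_mul L).
Local Notation one := (il_one L).
Local Notation le := (@il_le L).

Lemma il_joinC x y : join x y = join y x.
Proof. destruct (il_laws L) as [(joinC & _) _]; apply joinC. Qed.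

Lemma il_meetC x y : meet x y = meet y x.
Proof. destruct (il_laws L) as [(_ & meetC & _) _]; apply meetC. Qed.

Lemma il_joinA x y z : join x (join y z) = join (join x y) z.
Proof. destruct (il_laws L) as [(_ & _ & joinA & _) _]; apply joinA. Qed.

Lemma il_meetA x y z : meet x (meet y z) = meet (meet x y) z.
Proof. destruct (il_laws L) as [(_ & _ & _ & meetA & _) _]; apply meetA. Qed.

Lemma il_joinKI x y : join x (meet x y) = x.
Proof. destruct (il_laws L) as [(_ & _ & _ & _ & joinKI & _) _]; apply joinKI. Qed.

Lemma il_meetKU x y : meet x (join x y) = x.
Proof. destruct (il_laws L) as [(_ & _ & _ & _ & _ & meetKU) _]; apply meetKU. Qed.

Lemma il_le0x x : le bot x.
Proof. destruct (il_laws L) as (_ & le0x & _); apply le0x. Qed.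

Lemma il_mulA x y z : mul x (mul y z) = mul (mul x y) z.
Proof. destruct (il_laws L) as (_ & _ & (mulA & _) & _); apply mulA. Qed.

Lemma il_mulC x y : mul x y = mul y x.
Proof. destruct (il_laws L) as (_ & _ & (_ & mulC & _) & _); apply mulC. Qed.

Lemma il_mul1l x : mul one x = x.
Proof. destruct (il_laws L) as (_ & _ & (_ & _ & mul1l) & _); apply mul1l. Qed.

Lemma il_residuation x y z : le (mul x y) z <-> le x (imp y z).
Proof. destruct (il_laws L) as (_ & _ & _ & residuation); apply residuation. Qed.

Lemma il_le_imp x y z : le (mul x y) z -> le x (imp y z).
Proof. apply il_residuation. Qed.

Lemma il_mul_le x y z : le x (imp y z) -> le (mul x y) z.
Proof. apply il_residuation. Qed.

Lemma il_mulACA a b c d : mul (mul a b) (mul c d) = mul (mul a c) (mul b d).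
Proof.
  rewrite <- il_mulA, (il_mulA b), (il_mulC b c), <- (il_mulA c), il_mulA.
  reflexivity.
Qed.

Lemma il_meetxx x : meet x x = x.
Proof. rewrite <- (il_joinKI x x) at 2; apply il_meetKU. Qed.

Lemma il_le_refl x : le x x.
Proof. apply il_meetxx. Qed.

Lemma il_le_trans x y z : le x y -> le y z -> le x z.
Proof.
  unfold il_le, lat_le; intros Hxy Hyz.
  rewrite <- Hxy, <- il_meetA, Hyz; reflexivity.
Qed.

Lemma il_le_anti x y : le x y -> le y x -> x = y.
Proof. unfold il_le, lat_le; intros Hxy Hyx; rewrite <- Hxy, il_meetC; exact Hyx. Qed.

Lemma il_leIl x y : le (meet x y) x.
Proof. unfold il_le, lat_le; rewrite il_meetC, il_meetA, il_meetxx; reflexivity. Qed.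

Lemma il_leIr x y : le (meet x y) y.
Proof. unfold il_le, lat_le; rewrite <- il_meetA, il_meetxx; reflexivity. Qed.

Lemma il_lexI x y z : le z x -> le z y -> le z (meet x y).
Proof. unfold il_le, lat_le; intros Hx Hy; rewrite il_meetA, Hx, Hy; reflexivity. Qed.

Lemma il_leUl x y : le x (join x y).
Proof. apply il_meetKU. Qed.

Lemma il_leUr x y : le y (join x y).
Proof. unfold il_le, lat_le; rewrite il_joinC; apply il_meetKU. Qed.

Lemma il_join_idPr x y : le x y -> join x y = y.
Proof. unfold il_le, lat_le; intro Hxy; rewrite <- Hxy, il_joinC, il_meetC; apply il_joinKI. Qed.

Lemma il_leUx x y z : le x z -> le y z -> le (join x y) z.
Proof.
  intros Hx Hy.
  assert (Ez : join (join x y) z = z).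
  { rewrite <- il_joinA, (il_join_idPr Hy), (il_join_idPr Hx); reflexivity. }
  unfold il_le, lat_le; rewrite <- Ez at 1; apply il_meetKU.
Qed.

Lemma il_le_mul x x' y y' : le x x' -> le y y' -> le (mul x y) (mul x' y').
Proof.
  assert (mono_l : forall a b c, le a b -> le (mul a c) (mul b c)).
  { intros a b c Hab; apply il_mul_le.
    apply (il_le_trans Hab), il_le_imp, il_le_refl. }
  intros Hx Hy; apply il_le_trans with (mul x' y); [now apply mono_l|].
  rewrite (il_mulC x' y), (il_mulC x' y'); now apply mono_l.
Qed.

Lemma il_modus_ponens y z : le (mul (imp y z) y) z.
Proof. apply il_mul_le, il_le_refl. Qed.

Lemma il_one_le_imp x y : le x y -> le one (imp x y).
Proof. intro Hxy; apply il_le_imp; rewrite il_mul1l; exact Hxy. Qed.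

Lemma il_imp_mono_r x y y' : le y y' -> le (imp x y) (imp x y').
Proof. intro Hy; apply il_le_imp; exact (il_le_trans (il_modus_ponens x y) Hy). Qed.

Lemma il_imp_anti_l x x' z : le x x' -> le (imp x' z) (imp x z).
Proof.
  intro Hx; apply il_le_imp.
  apply il_le_trans with (mul (imp x' z) x');
    [apply il_le_mul; [apply il_le_refl | exact Hx] | apply il_modus_ponens].
Qed.

Lemma il_imp_comp x y z : le (mul (imp x y) (imp y z)) (imp x z).
Proof.
  apply il_le_imp; rewrite (il_mulC (imp x y)), <- il_mulA.
  apply il_le_trans with (mul (imp y z) y); [|apply il_modus_ponens].
  apply il_le_mul; [apply il_le_refl | apply il_modus_ponens].
Qed.

Lemma il_imp_curry x y z : imp (mul x y) z = imp x (imp y z).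
Proof.
  apply il_le_anti.
  - do 2 apply il_le_imp; rewrite <- il_mulA; apply il_modus_ponens.
  - apply il_le_imp; rewrite il_mulA; apply il_mul_le, il_modus_ponens.
Qed.

Lemma il_le_top x : le x (il_top L).
Proof. apply il_le_imp; rewrite il_mulC; apply il_mul_le, il_le0x. Qed.

Lemma il_imp_meet x x' y y' :
  le (meet (imp x x') (imp y y')) (imp (meet x y) (meet x' y')).
Proof.
  apply il_le_imp, il_lexI.
  - apply il_le_trans with (mul (imp x x') x); [|apply il_modus_ponens].
    apply il_le_mul; apply il_leIl.
  - apply il_le_trans with (mul (imp y y') y); [|apply il_modus_ponens].
    apply il_le_mul; apply il_leIr.
Qed.

(* [(a ∧ b) ∗ (x ∨ y) ≤ z] is split through [x ∨ y ≤ (a ∧ b) → z]. *)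
Lemma il_imp_join x x' y y' :
  le (meet (imp x x') (imp y y')) (imp (join x y) (join x' y')).
Proof.
  apply il_le_imp; rewrite il_mulC; apply il_mul_le.
  apply il_leUx; apply il_le_imp; rewrite il_mulC.
  - apply il_le_trans with x'; [|apply il_leUl].
    apply il_le_trans with (mul (imp x x') x); [|apply il_modus_ponens].
    apply il_le_mul; [apply il_leIl | apply il_le_refl].
  - apply il_le_trans with y'; [|apply il_leUr].
    apply il_le_trans with (mul (imp y y') y); [|apply il_modus_ponens].
    apply il_le_mul; [apply il_leIr | apply il_le_refl].
Qed.

Lemma il_imp_mul x x' y y' :
  le (mul (imp x x') (imp y y')) (imp (mul x y) (mul x' y')).
Proof.
  apply il_le_imp; rewrite il_mulACA.
  apply il_le_mul; apply il_modus_ponens.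
Qed.

Lemma il_imp_imp x x' y y' :
  le (mul (imp x' x) (imp y y')) (imp (imp x y) (imp x' y')).
Proof.
  apply il_le_imp.
  rewrite <- il_mulA, (il_mulC (imp y y')), il_mulA.
  apply il_le_trans with (mul (imp x' y) (imp y y')); [|apply il_imp_comp].
  apply il_le_mul; [apply il_imp_comp | apply il_le_refl].
Qed.

Section Congruence.
Variable F : L -> Prop.
Hypothesis HF : is_filter F.

Lemma filter_one : F one.
Proof. destruct HF as (_ & F1 & _); exact F1. Qed.

Lemma filter_le x y : F x -> le x y -> F y.
Proof. destruct HF as (_ & _ & _ & Fup); apply Fup. Qed.

Lemma filter_mul_le x y z : F x -> F y -> le (mul x y) z -> F z.
Proof. destruct HF as (_ & _ & Fclosed & _); intros Fx Fy; apply filter_le, Fclosed; auto. Qed.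

Lemma filter_meet_le x y z : F x -> F y -> le (meet x y) z -> F z.
Proof. destruct HF as (_ & _ & Fclosed & _); intros Fx Fy; apply filter_le, Fclosed; auto. Qed.

Lemma filter_imp_comp x y z : F (imp x y) -> F (imp y z) -> F (imp x z).
Proof. intros Fxy Fyz; exact (filter_mul_le Fxy Fyz (il_imp_comp x y z)). Qed.

Lemma rho_refl x : rho F x x.
Proof. split; apply (filter_le filter_one), il_one_le_imp, il_le_refl. Qed.

Lemma rho_sym x y : rho F x y -> rho F y x.
Proof. intros [Fxy Fyx]; split; assumption. Qed.

Lemma rho_trans x y z : rho F x y -> rho F y z -> rho F x z.
Proof. intros [Fxy Fyx] [Fyz Fzy]; split; eapply filter_imp_comp; eassumption. Qed.

Definition rho_congruent (f : L -> L -> L) : Prop :=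
  forall x x' y y', rho F x x' -> rho F y y' -> rho F (f x y) (f x' y').

Lemma rho_congruent_join : rho_congruent join.
Proof.
  intros x x' y y' [Fxx' Fx'x] [Fyy' Fy'y]; split.
  - exact (filter_meet_le Fxx' Fyy' (il_imp_join x x' y y')).
  - exact (filter_meet_le Fx'x Fy'y (il_imp_join x' x y' y)).
Qed.

Lemma rho_congruent_meet : rho_congruent meet.
Proof.
  intros x x' y y' [Fxx' Fx'x] [Fyy' Fy'y]; split.
  - exact (filter_meet_le Fxx' Fyy' (il_imp_meet x x' y y')).
  - exact (filter_meet_le Fx'x Fy'y (il_imp_meet x' x y' y)).
Qed.

Lemma rho_congruent_mul : rho_congruent mul.
Proof.
  intros x x' y y' [Fxx' Fx'x] [Fyy' Fy'y]; split.
  - exact (filter_mul_le Fxx' Fyy' (il_imp_mul x x' y y')).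
  - exact (filter_mul_le Fx'x Fy'y (il_imp_mul x' x y' y)).
Qed.

Lemma rho_congruent_imp : rho_congruent imp.
Proof.
  intros x x' y y' [Fxx' Fx'x] [Fyy' Fy'y]; split.
  - exact (filter_mul_le Fx'x Fyy' (il_imp_imp x x' y y')).
  - exact (filter_mul_le Fxx' Fy'y (il_imp_imp x' x y' y)).
Qed.

Lemma rho_meet_iff a b : rho F (meet a b) a <-> F (imp a b).
Proof.
  split.
  - intros [_ Fa_ab]; exact (filter_le Fa_ab (il_imp_mono_r a (il_leIr a b))).
  - intro Fab; split.
    + exact (filter_le filter_one (il_one_le_imp (il_leIl a b))).
    + destruct (rho_refl a) as [Faa _].
      rewrite <- (il_meetxx a) at 1.
      exact (filter_meet_le Faa Fab (il_imp_meet a a a b)).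
Qed.

End Congruence.
End ILAlgebraTheory.

Section Quotient.
Variables (L : ILAlgebra) (F : L -> Prop).
Hypothesis HF : is_filter F.

Lemma quot_eq (S T : quot F) : proj1_sig S = proj1_sig T -> S = T.
Proof. destruct S, T; simpl; intros ->; f_equal; apply proof_irrelevance. Qed.

Lemma qcls_eq_iff x y : qcls F x = qcls F y <-> rho F x y.
Proof.
  split.
  - intro Exy; apply (f_equal (@proj1_sig _ _)) in Exy.
    simpl in Exy; change (rclass F x y); rewrite Exy; apply (rho_refl HF).
  - intro Rxy; apply quot_eq; simpl; unfold rclass.
    apply functional_extensionality; intro z; apply propositional_extensionality.
    split; apply (rho_trans HF); auto using rho_sym.
Qed.

Definition qrep (S : quot F) : L :=
  proj1_sig (constructive_indefinite_description _ (proj2_sig S)).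

Lemma qcls_qrep S : qcls F (qrep S) = S.
Proof.
  apply quot_eq; unfold qrep; simpl.
  destruct (constructive_indefinite_description _ (proj2_sig S)); simpl; auto.
Qed.

Lemma qcls_surj S : exists x, S = qcls F x.
Proof. exists (qrep S); symmetry; apply qcls_qrep. Qed.

Definition qlift (f : L -> L -> L) (S T : quot F) : quot F :=
  qcls F (f (qrep S) (qrep T)).

Lemma qlift_qcls f : @rho_congruent L F f ->
  forall x y, qlift f (qcls F x) (qcls F y) = qcls F (f x y).
Proof.
  intros Hf x y; apply qcls_eq_iff, Hf; apply qcls_eq_iff, qcls_qrep.
Qed.

Local Notation qjoin := (qlift (il_join L)).
Local Notation qmeet := (qlift (il_meet L)).
Local Notation qimp := (qlift (il_imp L)).
Local Notation qmul := (qlift (il_mul L)).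

Lemma qjoin_qcls x y : qjoin (qcls F x) (qcls F y) = qcls F (il_join L x y).
Proof. exact (qlift_qcls (rho_congruent_join HF) x y). Qed.

Lemma qmeet_qcls x y : qmeet (qcls F x) (qcls F y) = qcls F (il_meet L x y).
Proof. exact (qlift_qcls (rho_congruent_meet HF) x y). Qed.

Lemma qmul_qcls x y : qmul (qcls F x) (qcls F y) = qcls F (il_mul L x y).
Proof. exact (qlift_qcls (rho_congruent_mul HF) x y). Qed.

Lemma qimp_qcls x y : qimp (qcls F x) (qcls F y) = qcls F (il_imp L x y).
Proof. exact (qlift_qcls (rho_congruent_imp HF) x y). Qed.

Lemma qle_qcls a b : lat_le qmeet (qcls F a) (qcls F b) <-> F (il_imp L a b).
Proof. unfold lat_le; rewrite qmeet_qcls, qcls_eq_iff; apply (rho_meet_iff HF). Qed.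

Ltac qcls_elim :=
  repeat match goal with S : quot F |- _ => destruct (qcls_surj S) as [? ->] end;
  repeat first [ rewrite qjoin_qcls | rewrite qmeet_qcls
               | rewrite qmul_qcls | rewrite qimp_qcls ].

Lemma quot_is_lattice : is_lattice qjoin qmeet.
Proof.
  repeat split; intros; qcls_elim; f_equal;
    auto using il_joinC, il_meetC, il_joinA, il_meetA, il_joinKI, il_meetKU.
Qed.

Lemma quot_le0x S : lat_le qmeet (qcls F (il_bot L)) S.
Proof. unfold lat_le; qcls_elim; f_equal; apply il_le0x. Qed.

Lemma quot_is_comm_monoid : is_comm_monoid qmul (qcls F (il_one L)).
Proof. repeat split; intros; qcls_elim; f_equal; auto using il_mulA, il_mulC, il_mul1l. Qed.

Lemma quot_residuation : residuation qmeet qimp qmul.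
Proof.
  intros S T U; qcls_elim; rewrite !qle_qcls, il_imp_curry; reflexivity.
Qed.

Lemma quot_lex1 : affine F -> forall S, lat_le qmeet S (qcls F (il_one L)).
Proof.
  intros HA S; qcls_elim; apply qle_qcls.
  apply (filter_le HF HA), il_imp_anti_l, il_le_top.
Qed.

End Quotient.

Theorem mainTheorem12 (L : ILAlgebra) (F : L -> Prop) :
  is_filter F -> affine F ->
  exists (qjoin qmeet qimp qmul : quot F -> quot F -> quot F),
    (forall x y : L, qjoin (qcls F x) (qcls F y) = qcls F (il_join L x y)) /\
    (forall x y : L, qmeet (qcls F x) (qcls F y) = qcls F (il_meet L x y)) /\
    (forall x y : L, qmul (qcls F x) (qcls F y) = qcls F (il_mul L x y)) /\
    (forall x y : L, qimp (qcls F x) (qcls F y) = qcls F (il_imp L x y)) /\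
    is_residuated_lattice qjoin qmeet (qcls F (il_bot L)) qimp qmul
      (qcls F (il_one L)).
Proof.
  intros HF HA.
  exists (qlift (il_join L)), (qlift (il_meet L)), (qlift (il_imp L)), (qlift (il_mul L)).
  split; [exact (qjoin_qcls HF)|].
  split; [exact (qmeet_qcls HF)|].
  split; [exact (qmul_qcls HF)|].
  split; [exact (qimp_qcls HF)|].
  split; [exact (quot_is_lattice HF)|].
  split; [exact (quot_le0x HF)|].
  split; [exact (quot_lex1 HF HA)|].
  split; [exact (quot_is_comm_monoid HF)|].
  exact (quot_residuation HF).
Qed.
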